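(* Let $\vec G$ be an orientation of the Coxeter diagram $s_1-\cdots-s_{n-1}$ of $S_n$, with up and down indices determined as described below. Then the Cambrian lattice $\mathcal C(\vec G)$ is isomorphic to the subposet of the weak order on $S_n$ consisting of the permutations that avoid both $\bar{2}31$ and $31\underline{2}$.
   Context: Weak order on $S_n$: $x\le y$ iff $I(x)\subseteq I(y)$, $I(x)=\{(x_j,x_i):i<j,x_i>x_j\}$; $s_i=(i,i+1)$. $\Theta(\vec G)$ is the smallest lattice congruence of the weak order with $t\equiv ts$ for every directed edge $s\to t$; $\mathcal C(\vec G)$ is the quotient lattice. Up/down indices: for $b\in[2,n-1]$, $b$ is up if $s_b\to s_{b-1}$ in $\vec G$ and down if $s_{b-1}\to s_b$; the indices $1$ and $n$ are declared up or down arbitrarily. A permutation $x=x_1\cdots x_n$ contains $\bar{2}31$ if there are $i<j<k$ with $x_k<x_i<x_j$ and $x_i$ up; it contains $31\underline{2}$ if there are $i<j<k$ with $x_j<x_k<x_i$ and $x_k$ down; otherwise it avoids the pattern. *)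

From mathcomp Require Import all_boot all_fingroup.
Set Implicit Arguments. Unset Strict Implicit. Unset Printing Implicit Defensive.

(* Conventions: S_n is {perm 'I_n}; positions and values are 0-based, so the
   paper's value/position k (1-based) is the ordinal with val k-1.
   The one-line notation of x is x_1 ... x_n with x_i = x (i-1). *)

Section Weak.
Variable n : nat.
Local Notation Sn := {perm 'I_n}.

Definition inv_set (x : Sn) : {set 'I_n * 'I_n} :=
  [set ij : 'I_n * 'I_n | [exists i : 'I_n, exists j : 'I_n,
    [&& i < j, x j < x i & ij == (x j, x i)]]].

Definition weak_le (x y : Sn) : bool := inv_set x \subset inv_set y.

Definition is_join (x y z : Sn) : Prop :=
  [/\ weak_le x z, weak_le y z & forall w, weak_le x w -> weak_le y w -> weak_le z w].
Definition is_meet (x y z : Sn) : Prop :=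
  [/\ weak_le z x, weak_le z y & forall w, weak_le w x -> weak_le w y -> weak_le w z].

Definition lattice_congruence (R : Sn -> Sn -> Prop) : Prop :=
  [/\ (forall x, R x x), (forall x y, R x y -> R y x),
      (forall x y z, R x y -> R y z -> R x z),
      (forall x x' y z z', R x x' -> is_join x y z -> is_join x' y z' -> R z z')
    & (forall x x' y z z', R x x' -> is_meet x y z -> is_meet x' y z' -> R z z')].

(* [up : nat -> bool] encodes the orientation and the up/down indices
   (1-based): for b in [2, n-1], up b = true means s_b -> s_(b-1) (b is up)
   and up b = false means s_(b-1) -> s_b (b is down); up 1 and up n are the
   arbitrary declarations for the indices 1 and n. *)

(* generating pairs (t, ts) for directed edges s -> t of the oriented path.
   The simple transposition s_k (1-based k) is tperm of the 0-based values
   k-1, k.  Here b is the 0-based value b'-1 of the middle index b' in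
   [2,n-1], so s_(b'-1) = tperm a b and s_b' = tperm b c.  Function
   composition t s is written explicitly (mathcomp's s * t is t o s). *)
Definition cambrian_gen (up : nat -> bool) (u v : Sn) : Prop :=
  exists a b c : 'I_n, [/\ val b = (val a).+1, val c = (val b).+1 &
    let sl := tperm a b in let sr := tperm b c in
    if up (val b).+1
    then (* s_b' -> s_(b'-1): s = sr, t = sl *) u = sl /\ v = (sr * sl)%g
    else (* s_(b'-1) -> s_b': s = sl, t = sr *) u = sr /\ v = (sl * sr)%g].

Definition Theta (up : nat -> bool) (x y : Sn) : Prop :=
  forall R, lattice_congruence R ->
    (forall u v, cambrian_gen up u v -> R u v) -> R x y.

(* order of the quotient lattice C(G), on representatives:
   [x] <= [y] iff x' <= y' for some x' in [x], y' in [y] *)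
Definition cambrian_le (up : nat -> bool) (x y : Sn) : Prop :=
  exists x' y', [/\ Theta up x x', Theta up y y' & weak_le x' y'].

(* pattern avoidance; the value x_i (0-based val v) is up iff up (v+1) *)
Definition contains_bar231 (up : nat -> bool) (x : Sn) : bool :=
  [exists i : 'I_n, exists j : 'I_n, exists k : 'I_n,
    [&& i < j, j < k, x k < x i, x i < x j & up (val (x i)).+1]].
Definition contains_312_under (up : nat -> bool) (x : Sn) : bool :=
  [exists i : 'I_n, exists j : 'I_n, exists k : 'I_n,
    [&& i < j, j < k, x j < x k, x k < x i & ~~ up (val (x k)).+1]].
Definition avoids_cambrian (up : nat -> bool) (x : Sn) : bool :=
  ~~ contains_bar231 up x && ~~ contains_312_under up x.

End Weak.

(* The bottom projection [proj_down] repeatedly swaps an adjacent descent [b a] of the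
   one-line notation that has a witness: a value [c] with [a < c < b] that is up and lies
   to its left, or is down and lies to its right.  It stops exactly at the permutations
   avoiding both patterns, and it has an explicit inversion set: [(u, v)] survives iff
   every subpair of [(u, v)] is an inversion.  That description is monotone and invariant
   under the swaps, so [proj_down] is order preserving, decreasing and idempotent; with the
   dual top projection (conjugate by reversal, flip the orientation) its kernel is a lattice
   congruence.  Conversely, any lattice congruence containing the generating pairs
   contracts every swap: covers with the same arc are contracted together, the witness
   makes the arc contain the arc of a generating pair, and the hexagonal intervals force
   every arc containing a contracted arc.  Hence the kernel of [proj_down] is [Theta]. *)

From mathcomp Require Import all_boot all_fingroup.
From mathcomp Require Import zify.
Set Implicit Arguments. Unset Strict Implicit. Unset Printing Implicit Defensive.

Ltac subst_ords := repeat match goal with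
  | H : is_true (nat_of_ord ?u == nat_of_ord ?v) |- _ =>
      move/eqP/val_inj: H => H; first [subst u | subst v]
  end.
Ltac case_ifs := repeat (case: ifP => /= ?); subst_ords.

Lemma ltn_homo_ord_id n (h : 'I_n -> 'I_n) : {homo h : i j / (i < j)%N} -> h =1 id.
Proof.
have le_homo (g : 'I_n -> 'I_n) : {homo g : i j / (i < j)%N} -> forall i : 'I_n, i <= g i.
  move=> g_lt [i lt_in]; elim: i lt_in => [//|i IH] lt_in.
  have := g_lt (Ordinal (ltnW lt_in)) (Ordinal lt_in) (ltnSn i).
  by have := IH (ltnW lt_in); rewrite /=; lia.
move=> h_lt i; apply: val_inj; apply/eqP; rewrite eqn_leq (le_homo h h_lt i) andbT.
have rev_lt : {homo (fun k => rev_ord (h (rev_ord k))) : i j / (i < j)%N}.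
  move=> j k lt_jk /=; have := ltn_ord (h (rev_ord j)); have := ltn_ord k.
  by have := h_lt (rev_ord k) (rev_ord j); rewrite /=; lia.
by have := le_homo _ rev_lt (rev_ord i); rewrite /= rev_ordK; have := ltn_ord (h i); lia.
Qed.

Section Inversions.
Variable n : nat.
Local Notation Sn := {perm 'I_n}.
Implicit Types (x y : Sn) (u v w : 'I_n).

Definition pos x v : nat := (x^-1)%g v.
Definition inverted x u v : bool := (u, v) \in inv_set x.

Lemma invertedE x u v : inverted x u v = (u < v) && (pos x v < pos x u).
Proof.
rewrite /inverted /inv_set inE /pos; apply/existsP/idP.
- case=> i /existsP [j /and3P [lt_ij lt_x /eqP [-> ->]]].
  by rewrite !permK lt_x lt_ij.
- case/andP => lt_uv lt_pos; exists ((x^-1)%g v); apply/existsP; exists ((x^-1)%g u).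
  by rewrite !permKV lt_pos lt_uv eqxx.
Qed.

Lemma pos_perm x (i : 'I_n) : pos x (x i) = i.
Proof. by rewrite /pos permK. Qed.

Lemma pos_inj x : injective (pos x).
Proof. by move=> u v /val_inj/perm_inj. Qed.

Lemma pos_neq x u v : u <> v :> nat -> pos x u <> pos x v.
Proof. by move=> neq /pos_inj eq_uv; apply: neq; rewrite eq_uv. Qed.

Lemma inverted_trans x u v w : inverted x u v -> inverted x v w -> inverted x u w.
Proof. rewrite !invertedE; lia. Qed.

Lemma inverted_split x u v w : u < v -> v < w -> inverted x u w ->
  inverted x u v || inverted x v w.
Proof.
move=> lt_uv lt_vw; have := @pos_neq x u v; have := @pos_neq x v w.
rewrite !invertedE; lia.
Qed.

Lemma weak_leP x y : reflect (forall u v, inverted x u v -> inverted y u v) (weak_le x y).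
Proof. by apply: (iffP subsetP) => [le u v | le [u v]]; apply: le. Qed.

Lemma weak_le_refl x : weak_le x x.
Proof. exact: subxx. Qed.

Lemma weak_le_trans x y z : weak_le x y -> weak_le y z -> weak_le x z.
Proof. exact: subset_trans. Qed.

Lemma inverted_inj x y : inverted x =2 inverted y -> x = y.
Proof.
move=> eq_inv.
suff id_yx : forall i, (y^-1)%g (x i) = i by apply/permP => i; rewrite -{2}(id_yx i) permKV.
apply: ltn_homo_ord_id => i j lt_ij.
have neq_x : x i <> x j :> nat by move/val_inj/perm_inj => eq_ij; rewrite eq_ij ltnn in lt_ij.
have := pos_neq (x := y) neq_x; have := eq_inv (x i) (x j); have := eq_inv (x j) (x i).
rewrite !invertedE /pos !permK; lia.
Qed.

Lemma weak_le_anti x y : weak_le x y -> weak_le y x -> x = y.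
Proof.
move=> /weak_leP le_xy /weak_leP le_yx; apply: inverted_inj => u v.
by apply/idP/idP; [apply: le_xy | apply: le_yx].
Qed.

Definition key_lt (k : 'I_n -> nat) u v := (k u < k v) || ((k u == k v) && (u < v)).
Definition key_rank k v := #|[pred u | key_lt k u v]|.

Lemma key_rank_lt k v : key_rank k v < n.
Proof.
rewrite /key_rank; have : [pred u | key_lt k u v] \subset predC1 v.
  by apply/subsetP => u; rewrite !inE /key_lt; apply: contraTneq => ->; lia.
move/subset_leq_card/leq_ltn_trans; apply; rewrite cardC1 card_ord; have := ltn_ord v; lia.
Qed.

Lemma key_rank_mono k u v : key_lt k u v -> key_rank k u < key_rank k v.
Proof.
move=> lt_uv; apply: proper_card; apply/properP; split.
  by apply/subsetP => w; rewrite !inE /key_lt; move: lt_uv; rewrite /key_lt; lia.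
by exists u; rewrite !inE // /key_lt; lia.
Qed.

Lemma key_rank_inj k : injective (fun v => Ordinal (key_rank_lt k v)).
Proof.
move=> u v [] eq_uv; apply/eqP; apply: contraT => neq_uv.
have : key_lt k u v || key_lt k v u by move: neq_uv; rewrite /key_lt -val_eqE /=; lia.
by case/orP => /key_rank_mono; lia.
Qed.

(* The permutation listing the values by increasing key, ties broken by value. *)
Definition key_perm k : Sn := ((perm (@key_rank_inj k))^-1)%g.

Lemma inverted_key_perm k u v : inverted (key_perm k) u v = (u < v) && (k v < k u).
Proof.
have pos_rank w : pos (key_perm k) w = key_rank k w by rewrite /pos /key_perm invgK permE.
rewrite invertedE !pos_rank; apply/andP/andP => -[lt_uv lt_k]; split => //.
- apply: contraTT lt_k; rewrite -!leqNgt => le_k.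
  by apply/ltnW/key_rank_mono; rewrite /key_lt; lia.
- by apply: key_rank_mono; rewrite /key_lt; lia.
Qed.

End Inversions.

Section Arcs.
Variable n : nat.
Local Notation Sn := {perm 'I_n}.
Implicit Types (x y z w : Sn) (a b c d u v : 'I_n) (s : 'I_n -> bool).

Lemma is_join_le_r x y : weak_le x y -> is_join x y y.
Proof. by split=> //; apply: weak_le_refl. Qed.

Lemma is_join_sym x y z : is_join x y z -> is_join y x z.
Proof. by case=> le_x le_y lub; split=> // w ? ?; apply: lub. Qed.

Lemma is_meet_le_l x y : weak_le x y -> is_meet x y x.
Proof. by split=> //; apply: weak_le_refl. Qed.

Lemma is_meet_le_r x y : weak_le y x -> is_meet x y y.
Proof. by split=> //; apply: weak_le_refl. Qed.

Lemma is_meet_sym x y z : is_meet x y z -> is_meet y x z.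
Proof. by case=> le_x le_y glb; split=> // w ? ?; apply: glb. Qed.

Definition weak_cover x' x a b := [/\ a < b, inverted x a b &
  forall u v, inverted x' u v = inverted x u v && ~~ ((u == a :> nat) && (v == b :> nat))].

Lemma weak_cover_le x' x a b : weak_cover x' x a b -> weak_le x' x.
Proof. by case=> _ _ inv_x'; apply/weak_leP => u v; rewrite inv_x' => /andP []. Qed.

Lemma weak_cover_between x' x a b c : weak_cover x' x a b -> a < c -> c < b ->
  inverted x a c = ~~ inverted x c b.
Proof.
case=> lt_ab inv_ab inv_x' lt_ac lt_cb.
case inv_ac: (inverted x a c); case inv_cb: (inverted x c b) => //=.
  have inv_ac' : inverted x' a c by rewrite inv_x' inv_ac /=; lia.
  have inv_cb' : inverted x' c b by rewrite inv_x' inv_cb /=; lia.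
  by have := inverted_trans inv_ac' inv_cb'; rewrite inv_x' !eqxx andbF.
by have := inverted_split lt_ac lt_cb inv_ab; rewrite inv_ac inv_cb.
Qed.

(* The arc of a cover of [x] removing [(a, b)]: its endpoints and, for each value [c]
   strictly between them, whether [c] lies to the left ([s c]) or to the right of the
   adjacent pair [b a] in the one-line notation of [x]. *)
Definition arc_sides x a b s := forall c, a < c -> c < b -> inverted x c b = ~~ s c.

Definition arc_key (ka kb : nat) a b s v : nat :=
  if v == b :> nat then kb else if v == a :> nat then ka
  else if (v < a) || ((v < b) && s v) then 0 else 3.

(* The join-irreducible permutation of the arc and its unique lower cover. *)
Definition arc_ji a b s : Sn := key_perm (arc_key 2 1 a b s).
Definition arc_ji_low a b s : Sn := key_perm (arc_key 1 2 a b s).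

Lemma weak_cover_arc_ji a b s : a < b -> weak_cover (arc_ji_low a b s) (arc_ji a b s) a b.
Proof.
move=> lt_ab; split=> // [|u v]; rewrite !inverted_key_perm /arc_key; case_ifs; lia.
Qed.

Lemma arc_ji_le x' x a b s : weak_cover x' x a b -> arc_sides x a b s ->
  weak_le (arc_ji a b s) x.
Proof.
move=> cov sides; have [lt_ab inv_ab _] := cov.
have side_pos c : a < c -> c < b ->
    (s c -> pos x c < pos x b /\ pos x c < pos x a) /\
    (~~ s c -> pos x b < pos x c /\ pos x a < pos x c).
  move=> lt_ac lt_cb; have := weak_cover_between cov lt_ac lt_cb; have := sides c lt_ac lt_cb.
  have := @pos_neq _ x c b; have := @pos_neq _ x a c.
  by rewrite !invertedE; case: (s c) => /=; lia.
apply/weak_leP => u v; move: inv_ab; rewrite inverted_key_perm !invertedE /arc_key.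
have := side_pos u; have := side_pos v; have := @pos_neq _ x a b.
case_ifs; lia.
Qed.

Lemma is_meet_cover_arc_ji x' x a b s : weak_cover x' x a b -> arc_sides x a b s ->
  is_meet x' (arc_ji a b s) (arc_ji_low a b s).
Proof.
move=> cov sides; have [lt_ab _ inv_x'] := cov.
have [_ _ inv_low] := weak_cover_arc_ji s lt_ab.
move/weak_leP: (arc_ji_le cov sides) => le_ji.
split; last first.
- move=> w /weak_leP le_w' /weak_leP le_wji; apply/weak_leP => u v inv_w.
  by rewrite inv_low le_wji //=; move: (le_w' u v inv_w); rewrite inv_x' => /andP [].
- exact: weak_cover_le (weak_cover_arc_ji s lt_ab).
- apply/weak_leP => u v; rewrite inv_low inv_x' => /andP [inv_uv ->].
  by rewrite le_ji.
Qed.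

Lemma is_join_cover_arc_ji x' x a b s : weak_cover x' x a b -> arc_sides x a b s ->
  is_join (arc_ji a b s) x' x.
Proof.
move=> cov sides; have [_ _ inv_x'] := cov.
split; [exact: arc_ji_le cov sides | exact: weak_cover_le cov |].
move=> w /weak_leP le_jiw /weak_leP le_x'w; apply/weak_leP => u v inv_x.
case: (boolP ((u == a :> nat) && (v == b :> nat))) => [|neq].
  case/andP => /eqP/val_inj -> /eqP/val_inj ->.
  by apply: le_jiw; have [lt_ab _ _] := cov; rewrite inverted_key_perm /arc_key; case_ifs; lia.
by apply: le_x'w; rewrite inv_x' inv_x neq.
Qed.

Section Congruence.
Variable R : Sn -> Sn -> Prop.
Hypothesis congR : lattice_congruence R.

Lemma cong_refl x : R x x. Proof. by case: congR. Qed.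
Lemma cong_sym x y : R x y -> R y x. Proof. by case: congR => _ sym _ _ _; apply: sym. Qed.
Lemma cong_trans x y z : R x y -> R y z -> R x z.
Proof. by case: congR => _ _ trans _ _; apply: trans. Qed.
Lemma cong_join x x' y z z' : R x x' -> is_join x y z -> is_join x' y z' -> R z z'.
Proof. by case: congR => _ _ _ join _; apply: join. Qed.
Lemma cong_meet x x' y z z' : R x x' -> is_meet x y z -> is_meet x' y z' -> R z z'.
Proof. by case: congR => _ _ _ _ meet; apply: meet. Qed.

Definition contracts_arc a b s :=
  forall x' x, weak_cover x' x a b -> arc_sides x a b s -> R x' x.

(* Meet with the join-irreducible of the arc, then join with the other cover. *)
Lemma weak_cover_contracts_arc x' x a b s : weak_cover x' x a b -> arc_sides x a b s ->
  R x' x -> contracts_arc a b s.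
Proof.
move=> cov sides Rx y' y cov_y sides_y; have [lt_ab _ _] := cov.
have R_ji : R (arc_ji_low a b s) (arc_ji a b s).
  apply: cong_meet Rx (is_meet_cover_arc_ji cov sides) _.
  exact/is_meet_le_r/(arc_ji_le cov sides).
have [le_low_y' _ _] := is_meet_cover_arc_ji cov_y sides_y.
exact: cong_join R_ji (is_join_le_r le_low_y') (is_join_cover_arc_ji cov_y sides_y).
Qed.

End Congruence.

Section Hexagon.
Variables (a d b : 'I_n) (s : 'I_n -> bool).
Hypotheses (lt_ad : a < d) (lt_db : d < b).

Definition hex_key (ka kd kb : nat) v : nat :=
  if v == a :> nat then ka else if v == d :> nat then kd else if v == b :> nat then kb
  else if (v < a) || ((v < b) && s v) then 0 else 4.

(* The interval of the weak order in which [a], [d], [b] take all six relative orders,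
   from [1 2 3] (bottom) to [3 2 1] (top), every other value staying put. *)
Definition hex ka kd kb : Sn := key_perm (hex_key ka kd kb).
Local Notation bot := (hex 1 2 3).
Local Notation r1 := (hex 1 3 2).
Local Notation r2 := (hex 2 3 1).
Local Notation l1 := (hex 2 1 3).
Local Notation l2 := (hex 3 1 2).
Local Notation top := (hex 3 2 1).

Ltac hex_inv := rewrite ?inverted_key_perm /hex_key; case_ifs; lia.
Ltac hex_le := apply/weak_leP => u v; hex_inv.
Ltac hex_cover := split; [lia | hex_inv | move=> u v; hex_inv].
Ltac hex_side := move=> c ? ?; hex_inv.

Lemma hex_chain_l : [/\ weak_le bot l1, weak_le l1 l2 & weak_le l2 top].
Proof. by split; hex_le. Qed.

Lemma hex_chain_r : [/\ weak_le bot r1, weak_le r1 r2 & weak_le r2 top].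
Proof. by split; hex_le. Qed.

Lemma hex_covers_l : [/\ weak_cover bot l1 a d, weak_cover l1 l2 a b & weak_cover l2 top d b].
Proof. by split; hex_cover. Qed.

Lemma hex_covers_r : [/\ weak_cover bot r1 d b, weak_cover r1 r2 a b & weak_cover r2 top a d].
Proof. by split; hex_cover. Qed.

Lemma hex_arc_sides_l :
  [/\ arc_sides l1 a d s, s d -> arc_sides l2 a b s & arc_sides top d b s].
Proof. by split=> [|sd|]; hex_side. Qed.

Lemma hex_arc_sides_r :
  [/\ arc_sides r1 d b s, ~~ s d -> arc_sides r2 a b s & arc_sides top a d s].
Proof. by split=> [|sd|]; hex_side. Qed.

Lemma hex_join : is_join r1 l1 top.
Proof.
have inv_top u v : inverted top u v ->
    [|| inverted r1 u v, inverted l1 u v | (u == a :> nat) && (v == b :> nat)].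
  by hex_inv.
have inv_l1_ad : inverted l1 a d by hex_inv.
have inv_r1_db : inverted r1 d b by hex_inv.
have [_ le_l1_l2 le_l2_top] := hex_chain_l; have [_ le_r1_r2 le_r2_top] := hex_chain_r.
split; [exact: weak_le_trans le_r1_r2 le_r2_top | exact: weak_le_trans le_l1_l2 le_l2_top |].
move=> w /weak_leP le_r1 /weak_leP le_l1; apply/weak_leP => u v /inv_top.
case/or3P => [/le_r1 // | /le_l1 // | /andP [/eqP/val_inj -> /eqP/val_inj ->]].
exact: inverted_trans (le_l1 _ _ inv_l1_ad) (le_r1 _ _ inv_r1_db).
Qed.

Lemma hex_meet : is_meet l2 r2 bot.
Proof.
have inv_l2_r2 u v : inverted l2 u v -> inverted r2 u v ->
    inverted bot u v || (u == a :> nat) && (v == b :> nat).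
  by hex_inv.
have not_r2_ad : ~~ inverted r2 a d by hex_inv.
have not_l2_db : ~~ inverted l2 d b by hex_inv.
have [le_bot_l1 le_l1_l2 _] := hex_chain_l; have [le_bot_r1 le_r1_r2 _] := hex_chain_r.
split; [exact: weak_le_trans le_bot_l1 le_l1_l2 | exact: weak_le_trans le_bot_r1 le_r1_r2 |].
move=> w /weak_leP le_l2 /weak_leP le_r2; apply/weak_leP => u v inv_w.
case/orP: (inv_l2_r2 u v (le_l2 u v inv_w) (le_r2 u v inv_w)) => //.
case/andP => /eqP/val_inj eq_u /eqP/val_inj eq_v; subst u v.
case/orP: (inverted_split lt_ad lt_db inv_w) => [/le_r2 | /le_l2].
  by rewrite (negbTE not_r2_ad).
by rewrite (negbTE not_l2_db).
Qed.

Section HexCongruence.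
Variable R : Sn -> Sn -> Prop.
Hypothesis congR : lattice_congruence R.

Lemma hex_contracts_arc : (if s d then R l1 l2 else R r1 r2) -> contracts_arc R a b s.
Proof.
have [_ cov_l _] := hex_covers_l; have [_ cov_r _] := hex_covers_r.
have [_ sides_l _] := hex_arc_sides_l; have [_ sides_r _] := hex_arc_sides_r.
case: (boolP (s d)) => sd /= R12.
  exact: (weak_cover_contracts_arc congR cov_l (sides_l sd) R12).
exact: (weak_cover_contracts_arc congR cov_r (sides_r sd) R12).
Qed.

Lemma contracts_arc_extend_left : contracts_arc R d b s -> contracts_arc R a b s.
Proof.
have [le_bot_l1 le_l1_l2 le_l2_top] := hex_chain_l.
have [le_bot_r1 le_r1_r2 le_r2_top] := hex_chain_r.
have [_ _ cov_top] := hex_covers_l; have [cov_r1 _ _] := hex_covers_r.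
have [_ _ sides_top] := hex_arc_sides_l; have [sides_r1 _ _] := hex_arc_sides_r.
move=> Rdb; apply: hex_contracts_arc; case: ifP => sd.
- have R_l1_top := cong_join congR (Rdb _ _ cov_r1 sides_r1) (is_join_le_r le_bot_l1) hex_join.
  exact: (cong_meet congR R_l1_top (is_meet_le_l le_l1_l2) (is_meet_le_r le_l2_top)).
- have R_bot_r2 := cong_meet congR (Rdb _ _ cov_top sides_top) hex_meet (is_meet_le_r le_r2_top).
  have R_bot_r1 := cong_meet congR R_bot_r2 (is_meet_le_l le_bot_r1) (is_meet_le_r le_r1_r2).
  exact: (cong_trans congR (cong_sym congR R_bot_r1) R_bot_r2).
Qed.

Lemma contracts_arc_extend_right : contracts_arc R a d s -> contracts_arc R a b s.
Proof.
have [le_bot_l1 le_l1_l2 le_l2_top] := hex_chain_l.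
have [le_bot_r1 le_r1_r2 le_r2_top] := hex_chain_r.
have [cov_l1 _ _] := hex_covers_l; have [_ _ cov_top] := hex_covers_r.
have [sides_l1 _ _] := hex_arc_sides_l; have [_ _ sides_top] := hex_arc_sides_r.
move=> Rad; apply: hex_contracts_arc; case: ifP => sd.
- have R_bot_l2 := cong_meet congR (Rad _ _ cov_top sides_top) (is_meet_sym hex_meet)
    (is_meet_le_r le_l2_top).
  have R_bot_l1 := cong_meet congR R_bot_l2 (is_meet_le_l le_bot_l1) (is_meet_le_r le_l1_l2).
  exact: (cong_trans congR (cong_sym congR R_bot_l1) R_bot_l2).
- have R_r1_top := cong_join congR (Rad _ _ cov_l1 sides_l1) (is_join_le_r le_bot_r1)
    (is_join_sym hex_join).
  exact: (cong_meet congR R_r1_top (is_meet_le_l le_r1_r2) (is_meet_le_r le_r2_top)).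
Qed.

End HexCongruence.
End Hexagon.

Lemma contracts_superarc R a b a' b' s : lattice_congruence R ->
  a <= a' -> a' < b' -> b' <= b -> contracts_arc R a' b' s -> contracts_arc R a b s.
Proof.
move=> congR le_aa' lt_a'b' le_b'b contr'.
have contr_ab' : contracts_arc R a b' s.
  case: (ltngtP a a') le_aa' => // [lt_aa' _ | /val_inj -> //].
  exact: (contracts_arc_extend_left lt_aa' lt_a'b' congR contr').
case: (ltngtP b' b) le_b'b => // [lt_b'b _ | /val_inj <- //].
exact: (contracts_arc_extend_right (leq_ltn_trans le_aa' lt_a'b') lt_b'b congR contr_ab').
Qed.

End Arcs.

Section Swaps.
Variable n : nat.
Local Notation Sn := {perm 'I_n}.
Implicit Types (x : Sn) (a b c u v : 'I_n).

Lemma val_tperm a b c : tperm a b c =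
  (if c == a :> nat then b else if c == b :> nat then a else c) :> nat.
Proof.
case: tpermP => [->|->|neq_a neq_b]; rewrite ?eqxx //; first by case: ifP => // /eqP/val_inj ->.
have -> : (c == a :> nat) = false by apply/eqP => /val_inj.
by have -> : (c == b :> nat) = false by apply/eqP => /val_inj.
Qed.

Lemma pos_tperm_mul x a b v : pos (tperm a b * x)%g v = tperm a b ((x^-1)%g v).
Proof. by rewrite /pos invMg tpermV permM. Qed.

Lemma weak_cover_swap x (i j : 'I_n) : j = i.+1 :> nat -> x j < x i ->
  weak_cover (tperm i j * x)%g x (x j) (x i).
Proof.
move=> ji lt_x; split=> //; first by rewrite invertedE !pos_perm lt_x; lia.
move=> u v; rewrite !invertedE !pos_tperm_mul !val_tperm.
have pos_eq w (k : 'I_n) : (pos x w == k :> nat) = (w == x k :> nat).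
  by apply/eqP/eqP => [/val_inj <- | /val_inj ->]; rewrite ?permKV ?pos_perm.
have := pos_eq u i; have := pos_eq u j; have := pos_eq v i; have := pos_eq v j.
case: (eqVneq (u : nat) v) => [-> | /eqP neq_uv]; first by rewrite ltnn.
have := pos_neq (x := x) neq_uv; rewrite /pos; case_ifs; lia.
Qed.

End Swaps.

Section Generators.
Variable n : nat.
Variables a m b : 'I_n.
Hypotheses (am : m = a.+1 :> nat) (mb : b = m.+1 :> nat).

Let neq_ma : m != a. Proof. by apply/eqP => /(congr1 (@nat_of_ord n)); lia. Qed.
Let neq_mb : m != b. Proof. by apply/eqP => /(congr1 (@nat_of_ord n)); lia. Qed.
Let neq_ab : a != b. Proof. by apply/eqP => /(congr1 (@nat_of_ord n)); lia. Qed.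
Let neq_ba : b != a. Proof. by rewrite eq_sym neq_ab. Qed.

Lemma weak_cover_gen_up :
  weak_cover (tperm a m) (tperm m b * tperm a m)%g a b /\
  ~~ inverted (tperm m b * tperm a m)%g m b.
Proof.
have pos_q w : pos (tperm m b * tperm a m)%g w = tperm m b (tperm a m w).
  by rewrite /pos invMg !tpermV permM.
split; last by rewrite invertedE !pos_q (tpermD neq_ab neq_mb) !tpermR (tpermD neq_ma neq_ba); lia.
have := weak_cover_swap (x := tperm m b * tperm a m) mb; rewrite tpermKg.
by rewrite !permM tpermR tpermR tpermL (tpermD neq_ab neq_mb); apply; lia.
Qed.

Lemma weak_cover_gen_down :
  weak_cover (tperm m b) (tperm a m * tperm m b)%g a b /\
  inverted (tperm a m * tperm m b)%g m b.
Proof.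
have pos_q w : pos (tperm a m * tperm m b)%g w = tperm a m (tperm m b w).
  by rewrite /pos invMg !tpermV permM.
split; last by rewrite invertedE !pos_q tpermL !tpermR (tpermD neq_ab neq_mb); lia.
have := weak_cover_swap (x := tperm a m * tperm m b) am; rewrite tpermKg.
by rewrite !permM tpermR !tpermL (tpermD neq_ma neq_ba); apply; lia.
Qed.

End Generators.

Section Cambrian.
Variables (n : nat) (up : nat -> bool).
Local Notation Sn := {perm 'I_n}.
Implicit Types (x y p q : Sn) (a b c d m u v w : 'I_n).

Definition is_up c := up c.+1.

Definition gen_pair a m b : Sn * Sn :=
  if is_up m then (tperm a m, tperm m b * tperm a m)%g else (tperm m b, tperm a m * tperm m b)%g.

Lemma cambrian_genP p q : cambrian_gen up p q <->
  exists a m b, [/\ m = a.+1 :> nat, b = m.+1 :> nat & (p, q) = gen_pair a m b].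
Proof.
rewrite /gen_pair /is_up; split=> -[a [m [b [am mb gen]]]]; exists a, m, b; split=> //.
  by case: (up m.+1) gen => -[-> ->].
by case: (up m.+1) gen => -[-> ->].
Qed.

Lemma weak_cover_gen_pair a m b : m = a.+1 :> nat -> b = m.+1 :> nat ->
  weak_cover (gen_pair a m b).1 (gen_pair a m b).2 a b /\
  inverted (gen_pair a m b).2 m b = ~~ is_up m.
Proof.
move=> am mb; rewrite /gen_pair; case: (is_up m) => /=.
  by have [cov inv] := weak_cover_gen_up am mb; split=> //; apply/negbTE.
exact: weak_cover_gen_down am mb.
Qed.

Section Forcing.
Variable R : Sn -> Sn -> Prop.
Hypotheses (congR : lattice_congruence R) (genR : forall p q, cambrian_gen up p q -> R p q).

(* The arc from [c - 1] to [c + 1] is that of a generating pair; every arc containing it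
   as a subarc is forced by the hexagons. *)
Lemma contracts_arc_of_witness a b c s : a < c -> c < b -> is_up c = s c ->
  contracts_arc R a b s.
Proof.
move=> lt_ac lt_cb up_c.
pose a' := Ordinal (leq_ltn_trans (leq_pred c) (ltn_ord c)).
pose b' := Ordinal (leq_ltn_trans lt_cb (ltn_ord b)).
have [|//|cov inv] := weak_cover_gen_pair (a := a') (m := c) (b := b'); first by rewrite /=; lia.
apply: (contracts_superarc congR (a' := a') (b' := b')) => /=; try lia.
apply: (weak_cover_contracts_arc congR cov) => [c' lt_a'c' lt_c'b' | ].
  have -> : c' = c by apply: ord_inj; move: lt_a'c' lt_c'b' => /=; lia.
  by rewrite inv up_c.
by apply: genR; apply/cambrian_genP; exists a', c, b'; split=> //=; [lia | case: gen_pair].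
Qed.

Definition contractible x a b :=
  [exists c : 'I_n, [&& a < c, c < b & is_up c == ~~ inverted x c b]].

Definition contractible_cover x' x := exists a b, weak_cover x' x a b /\ contractible x a b.

Lemma contractible_cover_cong x' x : contractible_cover x' x -> R x' x.
Proof.
case=> a [b [cov /existsP [c /and3P [lt_ac lt_cb /eqP up_c]]]].
apply: (contracts_arc_of_witness (s := fun c => ~~ inverted x c b) lt_ac lt_cb up_c cov).
by move=> c' _ _; rewrite negbK.
Qed.

End Forcing.

Lemma contractible_cover_gen p q : cambrian_gen up p q -> contractible_cover p q.
Proof.
case/cambrian_genP => a [m [b [am mb gen]]].
move: (weak_cover_gen_pair am mb); rewrite -gen => -[cov inv].
exists a, b; split=> //; apply/existsP; exists m; rewrite inv negbK eqxx andbT; lia.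
Qed.

Lemma contains_bar231_pos x a c d : pos x c < pos x d -> pos x d < pos x a ->
  a < c -> c < d -> is_up c -> contains_bar231 up x.
Proof.
move=> *; apply/existsP; exists (x^-1 c)%g; apply/existsP; exists (x^-1 d)%g.
by apply/existsP; exists (x^-1 a)%g; rewrite !permKV; apply/and5P.
Qed.

Lemma contains_312_pos x a c b : pos x b < pos x a -> pos x a < pos x c ->
  a < c -> c < b -> ~~ is_up c -> contains_312_under up x.
Proof.
move=> *; apply/existsP; exists (x^-1 b)%g; apply/existsP; exists (x^-1 a)%g.
by apply/existsP; exists (x^-1 c)%g; rewrite !permKV; apply/and5P.
Qed.

Lemma avoids_inverted_split x a b c : avoids_cambrian up x -> inverted x a b ->
  a < c -> c < b -> if is_up c then inverted x c b else inverted x a c.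
Proof.
case/andP => /negP no231 /negP no312 inv_ab lt_ac lt_cb; move: inv_ab.
have := @pos_neq _ x a c; have := @pos_neq _ x c b; rewrite !invertedE.
case: ifP => up_c neq_cb neq_ac /andP [_ lt_ba]; rewrite ?lt_cb ?lt_ac /=;
  rewrite ltnNge leq_eqVlt; apply/negP => /orP [/eqP|lt_pos]; try lia.
- by apply: no231; apply: (contains_bar231_pos (d := b) lt_pos lt_ba) => //; rewrite up_c.
- by apply: no312; apply: (contains_312_pos (c := c) lt_ba lt_pos) => //; rewrite up_c.
Qed.

(* The inversions of [proj_down x] are the pairs all of whose subpairs are inversions
   of [x]. *)
Definition subpair u v c d := [&& u <= c, c < d, d <= v,
  (c == u :> nat) || is_up c & (d == v :> nat) || ~~ is_up d].

Definition proj_inv x u v := (u < v) && [forall c, forall d, subpair u v c d ==> inverted x c d].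

Lemma proj_invP x u v :
  reflect (u < v /\ forall c d, subpair u v c d -> inverted x c d) (proj_inv x u v).
Proof.
apply: (iffP andP) => -[lt_uv sub]; split=> //.
  by move=> c d; move/forallP: sub => /(_ c) /forallP /(_ d) /implyP.
by apply/forallP => c; apply/forallP => d; apply/implyP; apply: sub.
Qed.

Lemma proj_inv_inverted x u v : proj_inv x u v -> inverted x u v.
Proof. by case/proj_invP => lt_uv; apply; rewrite /subpair !eqxx !leqnn lt_uv. Qed.

Lemma proj_inv_mono x y u v : weak_le x y -> proj_inv x u v -> proj_inv y u v.
Proof.
move=> /weak_leP le_xy /proj_invP [lt_uv sub]; apply/proj_invP; split=> // c d /sub.
exact: le_xy.
Qed.

Lemma subpair_split u v a b c : subpair u v a b -> a < c -> c < b ->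
  if is_up c then subpair u v c b else subpair u v a c.
Proof. by rewrite /subpair; case: (is_up c) => /=; lia. Qed.

Lemma proj_inv_contractible_cover x' x u v : contractible_cover x' x ->
  proj_inv x' u v = proj_inv x u v.
Proof.
case=> a [b [cov /existsP [w /and3P [lt_aw lt_wb /eqP up_w]]]].
apply/idP/idP; first exact: proj_inv_mono (weak_cover_le cov).
have [_ _ inv_x'] := cov.
case/proj_invP => lt_uv sub; apply/proj_invP; split=> // c d sub_cd.
rewrite inv_x' sub //=; apply/negP => /andP [/eqP/ord_inj eq_ca /eqP/ord_inj eq_db].
subst c d; have := subpair_split sub_cd lt_aw lt_wb.
case: ifP up_w => _ up_w /sub; first by move=> inv_wb; rewrite inv_wb in up_w.
by rewrite (weak_cover_between cov lt_aw lt_wb) -up_w.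
Qed.

Lemma proj_inv_avoiding x u v : avoids_cambrian up x -> proj_inv x u v = inverted x u v.
Proof.
move=> av; apply/idP/idP; first exact: proj_inv_inverted.
move=> inv_uv; have lt_uv : u < v by move: inv_uv; rewrite invertedE => /andP [].
apply/proj_invP; split=> // c d /and5P [le_uc lt_cd le_dv end_c end_d].
have inv_cv : inverted x c v.
  case: (eqVneq (c : nat) u) end_c => [/ord_inj -> // | neq_cu /= up_c].
  by have := @avoids_inverted_split x u v c av inv_uv; rewrite up_c; apply; lia.
case: (eqVneq (d : nat) v) end_d => [/ord_inj -> // | neq_dv /= up_d].
by have := @avoids_inverted_split x c v d av inv_cv; rewrite (negbTE up_d); apply; lia.
Qed.

Definition contractible_descent x (i j : 'I_n) :=
  [&& j == i.+1 :> nat, x j < x i & contractible x (x j) (x i)].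

Lemma contractible_descent_contains x i j : contractible_descent x i j ->
  contains_bar231 up x || contains_312_under up x.
Proof.
case/and3P => /eqP ji lt_x /existsP [w /and3P [lt_jw lt_wi /eqP]].
have := pos_perm x i; have := pos_perm x j.
have := @pos_neq _ x w (x i); have := @pos_neq _ x w (x j); rewrite invertedE lt_wi /=.
case: (boolP (is_up w)) => up_w neq_wj neq_wi pos_j pos_i /= pos_w.
  by rewrite (contains_bar231_pos (a := x j) (c := w) (d := x i)) //; lia.
by rewrite (contains_312_pos (b := x i) (a := x j) (c := w)) ?orbT //; lia.
Qed.

Lemma nat_crossing (P : pred nat) j k : j <= k -> P j -> ~~ P k ->
  exists2 m, j <= m < k & P m && ~~ P m.+1.
Proof.
elim: k => [|k IH] le_jk Pj nPk; first by move: le_jk Pj nPk; rewrite leqn0 => /eqP -> ->.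
case: (eqVneq j k.+1) => [eq_jk | neq_jk]; first by rewrite -eq_jk Pj in nPk.
case Pk: (P k); first by exists k; rewrite ?Pk //; lia.
by have [|m lt_m PPm] := IH _ Pj (negbT Pk); [lia | exists m => //; lia].
Qed.

Lemma descent_across x v (j k : 'I_n) : j <= k -> v < x j -> x k < v ->
  (forall t : 'I_n, j <= t <= k -> x t != v) ->
  exists i i' : 'I_n, [/\ i' = i.+1 :> nat, j <= i, i' <= k, v < x i & x i' < v].
Proof.
move=> le_jk lt_vj lt_kv neq_v.
pose P (m : nat) := [exists t : 'I_n, (t == m :> nat) && (v < x t)].
have [||m /andP [le_jm lt_mk] /andP [/existsP [i /andP [/eqP im lt_vi]] nPm1]] :=
  @nat_crossing P j k le_jk; first by apply/existsP; exists j; rewrite eqxx.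
  by apply/negP => /existsP [t /andP [/eqP/ord_inj eq_tk]]; rewrite eq_tk; lia.
have lt_m1 : m.+1 < n by have := ltn_ord k; lia.
pose i' := Ordinal lt_m1.
have neq_i'v : x i' <> v :> nat by move/ord_inj; apply/eqP/neq_v; rewrite /=; lia.
have : ~~ (v < x i') by apply: contra nPm1 => lt_vi'; apply/existsP; exists i'; rewrite eqxx.
by exists i, i'; split=> //=; lia.
Qed.

Lemma contractible_descent_witness x w (i i' : 'I_n) : i' = i.+1 :> nat ->
  x i' < w < x i -> is_up w = ~~ inverted x w (x i) -> contractible_descent x i i'.
Proof.
move=> ii' /andP [lt_i'w lt_wi] up_w; rewrite /contractible_descent ii' eqxx.
by rewrite (ltn_trans lt_i'w lt_wi); apply/existsP; exists w; rewrite lt_i'w lt_wi up_w eqxx.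
Qed.

Lemma contains_bar231_descent x : contains_bar231 up x ->
  exists i j, contractible_descent x i j.
Proof.
case/existsP => i /existsP [j /existsP [k /and5P [lt_ij lt_jk lt_ki lt_ij' up_i]]].
have [|p [p' [pp' le_jp _ lt_ip lt_p'i]]] := descent_across (ltnW lt_jk) lt_ij' lt_ki.
  by move=> t /andP [le_jt _]; apply/eqP => /perm_inj eq_ti; rewrite eq_ti in le_jt; lia.
exists p, p'; apply: (contractible_descent_witness (w := x i)) => //; first by rewrite lt_p'i.
by rewrite invertedE lt_ip /= !pos_perm /is_up up_i; lia.
Qed.

Lemma contains_312_descent x : contains_312_under up x ->
  exists i j, contractible_descent x i j.
Proof.
case/existsP => i /existsP [j /existsP [k /and5P [lt_ij lt_jk lt_jk' lt_ki down_k]]].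
have [|p [p' [pp' _ le_p'j lt_kp lt_p'k]]] := descent_across (ltnW lt_ij) lt_ki lt_jk'.
  by move=> t /andP [_ le_tj]; apply/eqP => /perm_inj eq_tk; rewrite eq_tk in le_tj; lia.
exists p, p'; apply: (contractible_descent_witness (w := x k)) => //; first by rewrite lt_p'k.
by rewrite invertedE lt_kp /= !pos_perm /is_up (negbTE down_k); lia.
Qed.

Lemma avoidsP x : reflect (forall i j, ~~ contractible_descent x i j) (avoids_cambrian up x).
Proof.
apply: (iffP idP) => [av i j | no_desc].
  by apply: contraL av => /contractible_descent_contains; rewrite /avoids_cambrian negb_and !negbK.
have no_desc' : ~ exists i j, contractible_descent x i j.
  by case=> i [j desc]; move: (no_desc i j); rewrite desc.
apply/andP; split; apply/negP; first by move/contains_bar231_descent/no_desc'.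
by move/contains_312_descent/no_desc'.
Qed.

Definition contract_step x : Sn :=
  if [pick ij : 'I_n * 'I_n | contractible_descent x ij.1 ij.2] is Some ij
  then (tperm ij.1 ij.2 * x)%g else x.

Lemma contract_step_avoiding x : avoids_cambrian up x -> contract_step x = x.
Proof.
rewrite /contract_step => /avoidsP no_desc; case: pickP => // -[i j] /= desc.
by have := no_desc i j; rewrite desc.
Qed.

Lemma contract_step_cover x : ~~ avoids_cambrian up x -> contractible_cover (contract_step x) x.
Proof.
rewrite /contract_step; case: pickP => [[i j] /= /and3P [/eqP ji lt_x contr] _ | none].
  by exists (x j), (x i); split=> //; apply: weak_cover_swap.
by case/negP; apply/avoidsP => i j; have /= -> := none (i, j).
Qed.

Lemma weak_cover_card x' x a b : weak_cover x' x a b -> #|inv_set x'| < #|inv_set x|.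
Proof.
move=> cov; have [_ inv_ab inv_x'] := cov; apply: proper_card; apply/properP.
split; first exact: weak_cover_le cov.
by exists (a, b) => //; rewrite -[_ \in _]/(inverted x' a b) inv_x' !eqxx andbF.
Qed.

(* Each step removes an inversion, and there are fewer than [n * n + 1] of them. *)
Definition proj_down x := iter (n * n).+1 contract_step x.

Lemma iter_contract_step k x : avoids_cambrian up (iter k contract_step x) \/
  #|inv_set (iter k contract_step x)| + k <= #|inv_set x|.
Proof.
elim: k => [|k IH]; first by right; rewrite addn0.
rewrite iterS; case: (boolP (avoids_cambrian up (iter k contract_step x))) => [av | not_av].
  by left; rewrite contract_step_avoiding.
have [a [b [cov _]]] := contract_step_cover not_av.
by right; case: IH not_av => [-> // | le_card _]; have := weak_cover_card cov; lia.
Qed.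

Lemma proj_down_avoids x : avoids_cambrian up (proj_down x).
Proof.
case: (iter_contract_step (n * n).+1 x) => // le_card.
by have := max_card (inv_set x); rewrite card_prod card_ord; lia.
Qed.

Lemma proj_down_id y : avoids_cambrian up y -> proj_down y = y.
Proof.
by move=> av; rewrite /proj_down; elim: (n * n).+1 => //= k ->; apply: contract_step_avoiding.
Qed.

Lemma proj_down_ind (Q : Sn -> Sn -> Prop) : (forall x, Q x x) ->
  (forall x y z, Q x y -> Q y z -> Q x z) ->
  (forall x' x, contractible_cover x' x -> Q x x') -> forall x, Q x (proj_down x).
Proof.
move=> Q_refl Q_trans Q_cover x; rewrite /proj_down; elim: (n * n).+1 => //= k IH.
apply: Q_trans IH _; case: (boolP (avoids_cambrian up (iter k contract_step x))).
  by move/contract_step_avoiding ->.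
by move/contract_step_cover; apply: Q_cover.
Qed.

Lemma proj_down_inverted x u v : inverted (proj_down x) u v = proj_inv x u v.
Proof.
rewrite -proj_inv_avoiding ?proj_down_avoids //.
pose Q x y := forall u v, proj_inv y u v = proj_inv x u v.
apply: (@proj_down_ind Q) => [//| x1 x2 x3 e12 e23 ? ? | x' y cov ? ?].
  by rewrite e23 e12.
exact: proj_inv_contractible_cover.
Qed.

Lemma proj_down_le x : weak_le (proj_down x) x.
Proof. by apply/weak_leP => u v; rewrite proj_down_inverted; apply: proj_inv_inverted. Qed.

Lemma proj_down_mono x y : weak_le x y -> weak_le (proj_down x) (proj_down y).
Proof.
by move=> le_xy; apply/weak_leP => u v; rewrite !proj_down_inverted; apply: proj_inv_mono.
Qed.

Lemma proj_down_idem x : proj_down (proj_down x) = proj_down x.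
Proof. exact/proj_down_id/proj_down_avoids. Qed.

Lemma proj_down_contractible_cover x' x : contractible_cover x' x -> proj_down x' = proj_down x.
Proof.
move=> cov; apply: inverted_inj => u v.
by rewrite !proj_down_inverted (proj_inv_contractible_cover _ _ cov).
Qed.

End Cambrian.

Section Reversal.
Variable n : nat.
Local Notation Sn := {perm 'I_n}.
Implicit Types (x y : Sn) (u v : 'I_n).

Definition reverse x : Sn := (perm (@rev_ord_inj n) * x)%g.

Lemma pos_reverse x v : pos (reverse x) v = n - (pos x v).+1.
Proof.
have rev_inv k : ((perm (@rev_ord_inj n))^-1)%g k = rev_ord k.
  by apply: (@perm_inj _ (perm (@rev_ord_inj n))); rewrite permKV permE rev_ordK.
by rewrite /pos /reverse invMg permM rev_inv.
Qed.

Lemma inverted_reverse x u v : inverted (reverse x) u v = (u < v) && ~~ inverted x u v.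
Proof.
rewrite !invertedE !pos_reverse; case: (ltnP u v) => //= lt_uv.
have := @pos_neq _ x u v; have := ltn_ord ((x^-1)%g u); have := ltn_ord ((x^-1)%g v).
rewrite /pos; lia.
Qed.

Lemma reverseK : involutive reverse.
Proof.
move=> x; apply: inverted_inj => u v.
by rewrite !inverted_reverse negb_and negbK invertedE; case: (u < v).
Qed.

Lemma reverse_le x y : weak_le x y -> weak_le (reverse y) (reverse x).
Proof.
move/weak_leP => le_xy; apply/weak_leP => u v; rewrite !inverted_reverse => /andP [-> /=].
exact: contra (le_xy u v).
Qed.

Lemma contractible_cover_reverse (up up' : nat -> bool) x' x :
  up' =1 (fun k => ~~ up k) -> contractible_cover up x' x ->
  contractible_cover up' (reverse x) (reverse x').
Proof.
move=> up'E [a [b [cov /existsP [w /and3P [lt_aw lt_wb /eqP up_w]]]]].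
have [lt_ab inv_ab inv_x'] := cov.
exists a, b; split.
  split=> // [|u v]; first by rewrite inverted_reverse inv_x' inv_ab !eqxx lt_ab.
  rewrite !inverted_reverse inv_x'.
  case: (boolP ((u == a :> nat) && _)) => [/andP [/eqP/ord_inj -> /eqP/ord_inj ->] | _].
    by rewrite inv_ab !andbF.
  by rewrite !andbT.
apply/existsP; exists w; rewrite lt_aw lt_wb /= /is_up up'E inverted_reverse inv_x' lt_wb.
by rewrite (gtn_eqF lt_aw) andbT /= negbK -[inverted x w b]negbK -up_w /is_up eqxx.
Qed.

End Reversal.

Section Kernel.
Variable n : nat.
Local Notation Sn := {perm 'I_n}.
Variables f g : Sn -> Sn.
Hypotheses (f_le : forall x, weak_le (f x) x) (g_ge : forall x, weak_le x (g x)).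
Hypotheses (f_mono : forall x y, weak_le x y -> weak_le (f x) (f y))
           (g_mono : forall x y, weak_le x y -> weak_le (g x) (g y)).
Hypotheses (f_idem : forall x, f (f x) = f x) (g_idem : forall x, g (g x) = g x).
Hypotheses (g_f : forall x, g (f x) = g x) (f_g : forall x, f (g x) = f x).

(* Joins are compared through [g], meets through [f]. *)
Lemma kernel_lattice_congruence : lattice_congruence (fun x y : Sn => f x = f y).
Proof.
have f_to_g x y : f x = f y -> g x = g y by move=> fxy; rewrite -g_f fxy g_f.
split=> [//|x y -> //|x y z -> -> //| x x' y z z' fx [le_xz le_yz lub] [le_x'z' le_yz' lub'] |
         x x' y z z' fx [le_zx le_zy glb] [le_z'x' le_z'y glb']].
- have gx := f_to_g _ _ fx; rewrite -f_g -[RHS]f_g; congr f; apply: weak_le_anti.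
  + rewrite -[g z']g_idem; apply: g_mono; apply: lub; last exact: weak_le_trans le_yz' (g_ge _).
    by apply: (weak_le_trans (g_ge x)); rewrite gx; apply: g_mono.
  + rewrite -[g z]g_idem; apply: g_mono; apply: lub'; last exact: weak_le_trans le_yz (g_ge _).
    by apply: (weak_le_trans (g_ge x')); rewrite -gx; apply: g_mono.
- apply: weak_le_anti.
  + rewrite -[f z]f_idem; apply: f_mono; apply: glb'; last exact: weak_le_trans (f_le _) le_zy.
    by apply: (weak_le_trans _ (f_le x')); rewrite -fx; apply: f_mono.
  + rewrite -[f z']f_idem; apply: f_mono; apply: glb; last exact: weak_le_trans (f_le _) le_z'y.
    by apply: (weak_le_trans _ (f_le x)); rewrite fx; apply: f_mono.
Qed.

End Kernel.

Section CambrianCongruence.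
Variables (n : nat) (up : nat -> bool).
Local Notation Sn := {perm 'I_n}.
Local Notation dual_up := (fun k => ~~ up k).
Implicit Types x y : Sn.

Definition proj_up x : Sn := reverse (proj_down dual_up (reverse x)).

Lemma proj_up_ge x : weak_le x (proj_up x).
Proof. by rewrite -{1}(reverseK x); apply/reverse_le/proj_down_le. Qed.

Lemma proj_up_mono x y : weak_le x y -> weak_le (proj_up x) (proj_up y).
Proof. by move=> le_xy; apply/reverse_le/proj_down_mono/reverse_le. Qed.

Lemma proj_up_idem x : proj_up (proj_up x) = proj_up x.
Proof. by rewrite /proj_up reverseK proj_down_idem. Qed.

Lemma proj_up_down x : proj_up (proj_down up x) = proj_up x.
Proof.
pose Q x y := proj_up x = proj_up y; apply: esym; apply: (@proj_down_ind _ _ Q) => //.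
  by move=> ? ? ?; rewrite /Q => -> ->.
move=> x' y cov; rewrite /Q /proj_up.
have cov' := contractible_cover_reverse (up' := dual_up) (frefl _) cov.
by rewrite (proj_down_contractible_cover cov').
Qed.

Lemma proj_down_up x : proj_down up (proj_up x) = proj_down up x.
Proof.
pose Q x y := proj_down up (reverse x) = proj_down up (reverse y).
rewrite -{2}(reverseK x); apply: esym; apply: (@proj_down_ind _ _ Q) => //.
  by move=> ? ? ?; rewrite /Q => -> ->.
move=> x' y cov; rewrite /Q.
have cov' := contractible_cover_reverse (up' := up) (fun k => esym (negbK _)) cov.
by rewrite (proj_down_contractible_cover cov').
Qed.

Lemma proj_down_congruence : lattice_congruence (fun x y : Sn => proj_down up x = proj_down up y).
Proof.
apply: (kernel_lattice_congruence (g := proj_up)).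
- exact: proj_down_le.
- exact: proj_up_ge.
- exact: proj_down_mono.
- exact: proj_up_mono.
- exact: proj_down_idem.
- exact: proj_up_idem.
- exact: proj_up_down.
- exact: proj_down_up.
Qed.

Lemma Theta_proj_down x : Theta up x (proj_down up x).
Proof.
move=> R congR genR; apply: (@proj_down_ind _ _ R) => [|???|x' y cov].
- exact: cong_refl.
- exact: cong_trans.
- exact/(cong_sym congR)/(contractible_cover_cong congR genR).
Qed.

Lemma proj_down_eq_Theta x y : proj_down up x = proj_down up y <-> Theta up x y.
Proof.
split=> [eq_xy R congR genR | Txy].
  have := Theta_proj_down x congR genR; have := Theta_proj_down y congR genR.
  by rewrite eq_xy => Ry Rx; exact: (cong_trans congR Rx (cong_sym congR Ry)).
apply: Txy proj_down_congruence _ => p q /contractible_cover_gen.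
exact: proj_down_contractible_cover.
Qed.

End CambrianCongruence.

Theorem theorem6p4 (n : nat) (up : nat -> bool) :
  exists f : {perm 'I_n} -> {perm 'I_n},
    [/\ (forall x, avoids_cambrian up (f x)),
        (forall y, avoids_cambrian up y -> exists x, f x = y),
        (forall x y, f x = f y <-> Theta up x y)
      & (forall x y, cambrian_le up x y <-> weak_le (f x) (f y))].
Proof.
exists (proj_down up); split.
- exact: proj_down_avoids.
- by move=> y av; exists y; apply: proj_down_id.
- exact: proj_down_eq_Theta.
- move=> x y; split=> [[x' [y' [/proj_down_eq_Theta -> /proj_down_eq_Theta -> le_x'y']]]|].
    exact: proj_down_mono.
  move=> le_xy; exists (proj_down up x), (proj_down up y).
  by split=> //; apply/proj_down_eq_Theta; rewrite proj_down_idem.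
Qed.
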